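(* For any matrix $Z=(Z_{ij})_{1\leq i,j\leq 3}$ of formal variables $Z_{ij}$, we have $$ \left(A|_{v = -p} \right)Z \left(\frac{\det(A)}{P(v)} A^{-1} \Big|_{v = -p}\right)=(U_{ij}X_j)_{1\leq i,j\leq 3} $$ with $pX_j\in R^{\mathrm{aux}}[Z_{ij},\, 1\leq i,j\leq 3]$, where $U=A|_{v=-p}$.
   Context: $p>3$ is prime, $\mathcal{O}$ is the ring of integers of a finite extension of $\mathbb{Q}_p$, and $P(v)=v+p$. Let $$ A = \begin{pmatrix} c_{11}+c_{11}^*(v+p)&c_{12}&c_{13}\\ vc_{21}&c_{22}+ c_{22}^*(v+p) &c_{23}\\ vc_{31}&vc_{32}&c_{33}+c_{33}^*(v+p) \end{pmatrix}. $$ $R^{\mathrm{aux}}$ is the $p$-saturation of the quotient of $\mathcal{O}[c_{ij},(c^{*}_{ii})^{\pm 1},\,1\leq i,j\leq 3]$ by the relations: all $2\times 2$ minors of $U=A|_{v=-p}=\begin{pmatrix}c_{11}&c_{12}&c_{13}\\-pc_{21}&c_{22}&c_{23}\\-pc_{31}&-pc_{32}&c_{33}\end{pmatrix}$ vanish, and $c_{11}c^*_{22}c^*_{33}+c_{22}c^*_{33}c^*_{11}+c_{33}c^*_{11}c^*_{22}-c_{11}^*c_{23}c_{32}-c_{22}^*c_{13}c_{31}-c_{33}^*c_{12}c_{21}+c_{21}c_{13}c_{32}=0$. Then $\frac{\det(A)}{P(v)}A^{-1}|_{v=-p}$ is the matrix $$\begin{pmatrix} c_{22}^* c_{33} + c_{33}^*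 c_{22} - c_{23} c_{32} & c_{13} c_{32} - c^*_{33} c_{12} & -c_{22}^* c_{13}\\ p c_{33}^* c_{21} & c_{11}^* c_{33} + c_{33}^* c_{11} - c_{13} c_{31}&c_{13} c_{21} - c_{11}^*c_{23}\\ -p c_{21} c_{32} + p c^*_{22} c_{31} & pc_{11}^* c_{32} & c_{11}^* c_{22} + c_{22}^* c_{11} - c_{12} c_{21} \end{pmatrix}.$$ It is known that $R^{\mathrm{aux}}$ is a domain in which every $c_{ij}$ is nonzero. *)

From mathcomp Require Import all_boot all_algebra.
From mathcomp Require Import fraction.
From mathcomp.multinomials Require Import mpoly.
Set Implicit Arguments. Unset Strict Implicit. Unset Printing Implicit Defensive.
Import GRing.Theory.
Local Open Scope ring_scope.

(* Entry c_{ij} with 1-based indices i j in {1,2,3}. *)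
Definition ent {T : Type} (c : 'M[T]_3) (i j : nat) : T :=
  c (@inord 2 i.-1) (@inord 2 j.-1).
Definition ents {T : Type} (cs : 'I_3 -> T) (i : nat) : T := cs (@inord 2 i.-1).

Section Aux.
Variable R : idomainType.
Variables (p : nat) (c : 'M[R]_3) (cs : 'I_3 -> R).

Definition Ppoly : {poly R} := 'X + (p%:R)%:P.

Definition Amat : 'M[{poly R}]_3 :=
  \matrix_(i, j)
    if i == j then (c i i)%:P + (cs i)%:P * Ppoly
    else if (i < j)%N then (c i j)%:P else 'X * (c i j)%:P.

Definition Umat : 'M[R]_3 := \matrix_(i, j) (Amat i j).[- p%:R].

(* det(A)/P(v) * A^{-1} = adj(A)/P(v), evaluated at v = -p *)
Definition Bmat : 'M[R]_3 := \matrix_(i, j) ((\adj Amat i j) %/ Ppoly).[- p%:R].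

Definition minors2_vanish (M : 'M[R]_3) : Prop :=
  forall i1 i2 j1 j2 : 'I_3, M i1 j1 * M i2 j2 - M i1 j2 * M i2 j1 = 0.

(* the cubic relation defining R^aux *)
Definition cubic_rel : R :=
  ent c 1 1 * ents cs 2 * ents cs 3 + ent c 2 2 * ents cs 3 * ents cs 1
  + ent c 3 3 * ents cs 1 * ents cs 2
  - ents cs 1 * ent c 2 3 * ent c 3 2 - ents cs 2 * ent c 1 3 * ent c 3 1
  - ents cs 3 * ent c 1 2 * ent c 2 1 + ent c 2 1 * ent c 1 3 * ent c 3 2.
End Aux.

Definition Zmx (K : nzRingType) : 'M[{mpoly K[3 * 3]}]_3 :=
  \matrix_(i, j) 'X_(mxvec_index i j).

(* Since U = A(-p) has rank at most one, adj A vanishes at v = -p, so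
   B := (adj(A)/P)(-p) is the derivative of adj A there: the differential of
   the adjugate at U in the direction D = A'.  Expanding it entrywise, the 2x2
   minors of U and the cubic relation give p B_lj = U_lj H_lj with H over R
   (dividing only by the units c*_ll).  Then the rank-one identity
   U_ik U_lj = U_ij U_lk turns p (U Z B)_ij = sum U_ik Z_kl U_lj H_lj into
   U_ij sum U_lk H_lj Z_kl, so X_j = p^-1 sum_(k,l) U_lk H_lj Z_kl. *)
From mathcomp Require Import all_boot all_algebra.
From mathcomp Require Import fraction.
From mathcomp.multinomials Require Import mpoly.
From mathcomp Require Import ring.
Import GRing.Theory.
Set Implicit Arguments. Unset Strict Implicit. Unset Printing Implicit Defensive.
Local Open Scope ring_scope.

Lemma det_mx22 (R : comNzRingType) (M : 'M[R]_2) :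
  \det M = M 0 0 * M 1 1 - M 0 1 * M 1 0.
Proof.
rewrite (expand_det_row _ 0) !big_ord_recl big_ord0 /cofactor !det_mx11 !mxE /=.
rewrite expr0 expr1 mul1r mulN1r addr0 mulrN.
by congr (_ * _ - _ * _); congr (M _ _); apply: val_inj.
Qed.

Lemma adj_mx33 (R : comNzRingType) (M : 'M[R]_3) (i j : 'I_3) :
  \adj M i j =
  M (j + 1) (i + 1) * M (j + 2) (i + 2) - M (j + 1) (i + 2) * M (j + 2) (i + 1).
Proof.
rewrite mxE /cofactor det_mx22 !mxE.
pose m (a b : nat) := M (inord a) (inord b).
have Em (a b : 'I_3) : M a b = m a b by rewrite /m !inord_val.
case: i => [[|[|[|i]]] Hi] //; case: j => [[|[|[|j]]] Hj] //.
all: by rewrite !Em /bump /modn /= ?expr0 ?expr1 ?expr2; ring.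
Qed.

Lemma adj_mx33_eq0 (R : comNzRingType) (M : 'M[R]_3) :
  (forall i1 i2 j1 j2, M i1 j1 * M i2 j2 = M i1 j2 * M i2 j1) -> \adj M = 0.
Proof. by move=> rkM; apply/matrixP => i j; rewrite adj_mx33 rkM subrr mxE. Qed.

Definition adj_diff (R : comNzRingType) (X W : 'M[R]_3) : 'M[R]_3 :=
  \matrix_(i, j)
    (W (j + 1) (i + 1) * X (j + 2) (i + 2) + X (j + 1) (i + 1) * W (j + 2) (i + 2)
     - W (j + 1) (i + 2) * X (j + 2) (i + 1) - X (j + 1) (i + 2) * W (j + 2) (i + 1)).

Section PolyAdjugate.
Variable R : comNzRingType.

Lemma horner_adj n (M : 'M[{poly R}]_n) (x : R) i j :
  (\adj M i j).[x] = \adj (map_mx (horner^~ x) M) i j.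
Proof. by have /matrixP/(_ i j) := map_mx_adj (horner_eval x) M; rewrite mxE. Qed.

Lemma horner_deriv_adj_mx33 (M : 'M[{poly R}]_3) (x : R) i j :
  (\adj M i j)^`().[x] =
  adj_diff (map_mx (horner^~ x) M) (map_mx (fun q => q^`().[x]) M) i j.
Proof. by rewrite adj_mx33 !mxE !derivE !hornerE; ring. Qed.

End PolyAdjugate.

Lemma horner_divp_root (R : idomainType) (q : {poly R}) (x : R) :
  root q x -> (q %/ ('X - x%:P)).[x] = q^`().[x].
Proof.
move=> /factor_theorem [r ->].
rewrite (Pdiv.IdomainMonic.mulpK (monicXsubC x)).
by rewrite derivM !derivE !hornerE subrr mulr0 add0r.
Qed.

Lemma eq_mod_relation (S : comNzRingType) (x y k e : S) :
  e = 0 -> x - y = k * e -> x = y.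
Proof. by move=> -> /eqP; rewrite mulr0 subr_eq0 => /eqP. Qed.

Lemma eq_mod_relations (S : idomainType) (w x y k1 k2 k3 k4 e1 e2 e3 e4 : S) :
  w != 0 -> e1 = 0 -> e2 = 0 -> e3 = 0 -> e4 = 0 ->
  w * (x - y) = k1 * e1 + k2 * e2 + k3 * e3 + k4 * e4 -> x = y.
Proof.
move=> w0 -> -> -> ->; rewrite !mulr0 !addr0 => /eqP.
by rewrite mulf_eq0 (negPf w0) subr_eq0 => /eqP.
Qed.

Section AuxiliaryMatrices.
Variables (R : idomainType) (p : nat) (c : 'M[R]_3) (cs : 'I_3 -> R).

Definition Dmat : 'M[R]_3 :=
  \matrix_(i, j) if i == j then cs i else if (i < j)%N then 0 else c i j.

Lemma UmatE i j : Umat p c cs i j =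
  if i == j then c i j else if (i < j)%N then c i j else - p%:R * c i j.
Proof.
rewrite !mxE; case: eqP => [<-|_]; last case: ifP => _.
all: by rewrite /Ppoly !hornerE ?addNr ?mulr0 ?addr0.
Qed.

Lemma deriv_Amat x : map_mx (fun q => q^`().[x]) (Amat p c cs) = Dmat.
Proof.
apply/matrixP => i j; rewrite !mxE; case: eqP => _; last case: ifP => _.
all: by rewrite /Ppoly !derivE !hornerE ?addr0 ?mulr1.
Qed.

Hypothesis rkU : minors2_vanish (Umat p c cs).

Lemma Bmat_adj_diff : Bmat p c cs = adj_diff (Umat p c cs) Dmat.
Proof.
have AU : map_mx (horner^~ (- p%:R)) (Amat p c cs) = Umat p c cs.
  by apply/matrixP => i j; rewrite !mxE.
have PX : Ppoly R p = 'X - (- p%:R)%:P by rewrite /Ppoly polyCN opprK.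
apply/matrixP => i j; rewrite mxE PX horner_divp_root.
  by rewrite horner_deriv_adj_mx33 AU deriv_Amat.
rewrite /root horner_adj AU adj_mx33_eq0 ?mxE // => i1 i2 j1 j2.
by apply/eqP; rewrite -subr_eq0 rkU.
Qed.

(* For l != j, the remaining index of 'I_3 is -(l + j). *)
Definition Hmat : 'M[R]_3 := \matrix_(l, j)
  if l == j then
    - (c (l + 1) (l + 1) * cs (l + 2) + c (l + 2) (l + 2) * cs (l + 1)
       - c (l + 1) (l + 2) * c (l + 2) (l + 1) + p%:R * cs (l + 1) * cs (l + 2)) / cs l
  else - (p%:R * cs (- (l + j)) + (j == l + 1)%:R * c (- (l + j)) (- (l + j))).

Let cN (a b : nat) : R := c (inord a) (inord b).
Let csN (a : nat) : R := cs (inord a).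
Let UN (a b : nat) : R :=
  if a == b then cN a b else if (a < b)%N then cN a b else - p%:R * cN a b.

Let c_ord (a b : 'I_3) : c a b = cN a b.
Proof. by rewrite /cN !inord_val. Qed.

Let cs_ord (a : 'I_3) : cs a = csN a.
Proof. by rewrite /csN inord_val. Qed.

Let Umat_ord (a b : 'I_3) : Umat p c cs a b = UN a b.
Proof. by rewrite UmatE !c_ord. Qed.

Let UN_minor (a1 a2 b1 b2 : nat) :
  (a1 < 3)%N -> (a2 < 3)%N -> (b1 < 3)%N -> (b2 < 3)%N ->
  UN a1 b1 * UN a2 b2 - UN a1 b2 * UN a2 b1 = 0.
Proof.
move=> h1 h2 h3 h4.
by have := rkU (Ordinal h1) (Ordinal h2) (Ordinal h3) (Ordinal h4); rewrite !Umat_ord.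
Qed.

Hypotheses (p0 : (p%:R : R) != 0) (csU : forall i, cs i \is a GRing.unit).
Hypothesis cub : cubic_rel c cs = 0.

Lemma Bmat_hadamard l j : p%:R * Bmat p c cs l j = Umat p c cs l j * Hmat l j.
Proof.
have cubN := cub; rewrite /cubic_rel /ent /ents /= in cubN.
rewrite Bmat_adj_diff; case: l => [[|[|[|l]]] Hl] //; case: j => [[|[|[|j]]] Hj] //.
(* Sums of concrete ordinals in 'I_3 only compute once modn is unfolded. *)
all: rewrite [adj_diff _ _ _ _]mxE [Hmat _ _]mxE !Umat_ord /UN !mxE !c_ord !cs_ord /bump /=.
all: rewrite /modn /modn_rec /subn /subn_rec /addn /addn_rec /=.
- rewrite [RHS]mulrA; apply: (canRL (mulrK (csU _))).
  have e1 := @UN_minor 0 2 0 2 isT isT isT isT; have e2 := @UN_minor 0 1 0 1 isT isT isT isT.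
  have e3 := @UN_minor 0 1 0 2 isT isT isT isT; rewrite /UN /= in e1 e2 e3.
  apply: (eq_mod_relations (w := 1) (k1 := p%:R) (k2 := csN 1) (k3 := csN 2)
    (k4 := - cN 2 1) (oner_neq0 _) cubN e1 e2 e3); rewrite /csN /cN; ring.
- have e := @UN_minor 0 2 1 2 isT isT isT isT; rewrite /UN /= in e.
  by apply: (eq_mod_relation (k := 1) e); ring.
- ring.
- have e := @UN_minor 1 2 0 2 isT isT isT isT; rewrite /UN /= in e.
  by apply: (eq_mod_relation (k := 1) e); ring.
- (* The term c_10 c_02 c_21 (0-based) of the cubic relation occurs in the
     minors only with a factor p^2, hence the multiplier p. *)
  rewrite [RHS]mulrA; apply: (canRL (mulrK (csU _))).
  have e1 := @UN_minor 0 1 0 1 isT isT isT isT; have e2 := @UN_minor 1 2 1 2 isT isT isT isT.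
  have e3 := @UN_minor 1 2 0 1 isT isT isT isT; rewrite /UN /= in e1 e2 e3.
  apply: (eq_mod_relations (k1 := p%:R * p%:R) (k2 := p%:R * csN 2)
    (k3 := p%:R * csN 0) (k4 := - cN 0 2) p0 cubN e1 e2 e3); rewrite /csN /cN; ring.
- have e := @UN_minor 0 1 0 2 isT isT isT isT; rewrite /UN /= in e.
  by apply: (eq_mod_relation (k := 1) e); ring.
- have e := @UN_minor 1 2 0 1 isT isT isT isT; rewrite /UN /= in e.
  by apply: (eq_mod_relation (k := -2) e); ring.
- have e := @UN_minor 0 2 0 1 isT isT isT isT; rewrite /UN /= in e.
  by apply: (eq_mod_relation (k := 1) e); ring.
- rewrite [RHS]mulrA; apply: (canRL (mulrK (csU _))).
  have e1 := @UN_minor 0 2 0 2 isT isT isT isT; have e2 := @UN_minor 1 2 1 2 isT isT isT isT.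
  have e3 := @UN_minor 0 2 1 2 isT isT isT isT; rewrite /UN /= in e1 e2 e3.
  apply: (eq_mod_relations (w := 1) (k1 := p%:R) (k2 := csN 1) (k3 := csN 0)
    (k4 := - cN 1 0) (oner_neq0 _) cubN e1 e2 e3); rewrite /csN /cN; ring.
Qed.

End AuxiliaryMatrices.

Lemma mulmx_rank1_hadamard (S : comNzRingType) n (U Z B H : 'M[S]_n) (a : S) :
  (forall i1 i2 j1 j2, U i1 j1 * U i2 j2 = U i1 j2 * U i2 j1) ->
  (forall l j, a * B l j = U l j * H l j) ->
  forall i j, a * (U *m Z *m B) i j = U i j * \sum_k \sum_l U l k * H l j * Z k l.
Proof.
move=> rkU aB i j; rewrite mxE; under eq_bigr do rewrite mxE big_distrl /=.
rewrite exchange_big !mulr_sumr; apply: eq_bigr => k _.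
rewrite !mulr_sumr; apply: eq_bigr => l _.
by rewrite mulrCA aB mulrACA rkU -mulrA [Z k l * _]mulrC mulrA.
Qed.

Lemma mulmx_Zmx_rank1_hadamard (R : idomainType) (U B H : 'M[R]_3) (a : R) :
  a != 0 ->
  (forall i1 i2 j1 j2, U i1 j1 * U i2 j2 = U i1 j2 * U i2 j1) ->
  (forall l j, a * B l j = U l j * H l j) ->
  exists X : 'I_3 -> {mpoly {fraction R}[3 * 3]},
    map_mx (fun r : R => (@tofrac R r)%:MP) U *m Zmx {fraction R}
      *m map_mx (fun r : R => (@tofrac R r)%:MP) B
    = \matrix_(i, j) ((@tofrac R (U i j))%:MP * X j)
    /\ forall j, exists Y : {mpoly R[3 * 3]},
         map_mpoly (@tofrac R) Y = tofrac a *: X j.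
Proof.
move=> a0 rkU hadB.
pose f (r : R) : {mpoly {fraction R}[3 * 3]} := (tofrac r)%:MP.
have fM x y : f (x * y) = f x * f y by rewrite /f !rmorphM.
have fa0 : tofrac a != 0 by rewrite tofrac_eq0.
pose Y j : {mpoly R[3 * 3]} :=
  \sum_k \sum_l (U l k * H l j) *: 'X_(mxvec_index k l).
have mapY j : map_mpoly (@tofrac R) (Y j) =
    \sum_k \sum_l f (U l k) * f (H l j) * 'X_(mxvec_index k l).
  rewrite raddf_sum; apply: eq_bigr => k _; rewrite raddf_sum; apply: eq_bigr => l _.
  by rewrite /= map_mpolyZ map_mpolyX -fM /f mul_mpolyC.
exists (fun j => (tofrac a)^-1 *: map_mpoly (@tofrac R) (Y j)); split; last first.
  by move=> j; exists (Y j); rewrite scalerA mulfV // scale1r.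
have rkUf i1 i2 j1 j2 :
    map_mx f U i1 j1 * map_mx f U i2 j2 = map_mx f U i1 j2 * map_mx f U i2 j1.
  by rewrite !mxE -!fM rkU.
have hadBf l j : f a * map_mx f B l j = map_mx f U l j * map_mx f H l j.
  by rewrite !mxE -!fM hadB.
apply/matrixP => i j; apply: (mulfI (_ : f a != 0)); first by rewrite mpolyC_eq0.
rewrite (mulmx_rank1_hadamard _ rkUf hadBf) !mxE [RHS]mulrCA; congr (_ * _).
rewrite /f mul_mpolyC scalerA mulfV // scale1r mapY.
by apply: eq_bigr => k _; apply: eq_bigr => l _; rewrite !mxE.
Qed.

Theorem lemma8p2 (p : nat) (R : idomainType) (c : 'M[R]_3) (cs : 'I_3 -> R) :
  prime p -> (3 < p)%N -> (p%:R : R) != 0 ->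
  (forall i, cs i \is a GRing.unit) ->
  (forall i j, c i j != 0) ->
  minors2_vanish (Umat p c cs) ->
  cubic_rel c cs = 0 ->
  exists X : 'I_3 -> {mpoly {fraction R}[3 * 3]},
    map_mx (fun r : R => (@tofrac R r)%:MP) (Umat p c cs) *m Zmx {fraction R}
      *m map_mx (fun r : R => (@tofrac R r)%:MP) (Bmat p c cs)
    = \matrix_(i, j) ((@tofrac R (Umat p c cs i j))%:MP * X j)
    /\ forall j, exists Y : {mpoly R[3 * 3]},
         map_mpoly (@tofrac R) Y = (p%:R : {fraction R}) *: X j.
Proof.
move=> _ _ p0 csU _ rkU cub; rewrite -(rmorph_nat (@tofrac R)).
apply: mulmx_Zmx_rank1_hadamard p0 _ (Bmat_hadamard rkU p0 csU cub).
by move=> i1 i2 j1 j2; apply/eqP; rewrite -subr_eq0 rkU.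
Qed.
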